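(* Let $L$ be the operator on $l^2$ mapping $(\xi_1,\xi_2,\xi_3,\dots)$ to $(0,\dots,0,\xi_{k+1},\xi_{k+2},\dots)$ (first $k$ entries replaced by $0$), and let $Y$ be a bounded operator on $l^2$ such that (1) $(\xi,Y\xi)\ge0$ for all $\xi\in l^2$, and (2) if $L\xi=0$ and $(\xi,Y\xi)=0$ then $\xi=0$. Then there exists $\kappa>0$ such that $(\xi,(L+Y)\xi)\ge\kappa(\xi,\xi)$ for all $\xi\in l^2$.
   Context: $l^2$ is the Hilbert space of complex square-summable sequences with inner product $(\xi,\eta)=\sum_j\bar\xi_j\eta_j$; $k$ is a fixed nonnegative integer. *)

From Stdlib Require Import Reals Lra Arith.
From Coquelicot Require Import Coquelicot.
Open Scope R_scope.

(** Complex sequences (indexed from 0). *)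
Definition seqC := nat -> C.

Definition in_l2 (x : seqC) : Prop := ex_series (fun j => (Cmod (x j)) ^ 2).

(** Inner product (x,y) = sum conj(x_j) y_j, antilinear in the first slot.
    Real and imaginary parts are summed separately (both converge on l^2). *)
Definition l2_ip (x y : seqC) : C :=
  (Series (fun j => Re (Cmult (Cconj (x j)) (y j))),
   Series (fun j => Im (Cmult (Cconj (x j)) (y j)))).

Definition l2_norm (x : seqC) : R := sqrt (Series (fun j => (Cmod (x j)) ^ 2)).

Definition opL (k : nat) (x : seqC) : seqC :=
  fun j => if (j <? k)%nat then RtoC 0 else x j.

(** Bounded (linear) operator on l^2, given as a map on sequences whose
    behaviour is only constrained on l^2. *)
Definition bounded_op (Y : seqC -> seqC) : Prop :=
  (forall x, in_l2 x -> in_l2 (Y x)) /\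
  (forall (a b : C) (x y : seqC), in_l2 x -> in_l2 y ->
     forall j, Y (fun i => Cplus (Cmult a (x i)) (Cmult b (y i))) j
               = Cplus (Cmult a (Y x j)) (Cmult b (Y y j))) /\
  (exists M : R, forall x, in_l2 x -> l2_norm (Y x) <= M * l2_norm x).

(** Order on complex numbers: z >= w iff z - w is real and nonnegative. *)
Definition Cge (z w : C) : Prop := Im z = Im w /\ Re w <= Re z.

From Stdlib Require Import Reals Lra Lia FunctionalExtensionality.
From Coquelicot Require Import Coquelicot.
Open Scope R_scope.

(* Write x = v + w with v = (x_1, ..., x_k, 0, ...) and w = L x, so that (x, L x) = |w|^2.
   On the 2k-dimensional real space of such v the form q(v) = Re (v, Y v) is positive
   definite by (1) and (2), hence q(v) >= c |v|^2; this is proved by induction on the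
   dimension, eliminating one coordinate at a time by completing the square (Schur
   complement).  Expanding q(v + w) and bounding the cross terms by |Y| and Young's
   inequality gives q(x) >= c/2 |v|^2 - E |w|^2; averaging this with q(x) >= 0 yields
   |w|^2 + q(x) >= kappa (|v|^2 + |w|^2).  The imaginary part of (x, (L + Y) x) vanishes
   by (1). *)

Fixpoint fsum (m : nat) (f : nat -> R) : R :=
  match m with O => 0 | S m' => fsum m' f + f m' end.

Lemma fsum_ext m f g : (forall i, (i < m)%nat -> f i = g i) -> fsum m f = fsum m g.
Proof.
  induction m as [|m IH]; intros Hfg; simpl; [reflexivity|].
  rewrite IH by (intros; apply Hfg; lia). rewrite Hfg by lia; reflexivity.
Qed.

Lemma fsum_eq0 m f : (forall i, (i < m)%nat -> f i = 0) -> fsum m f = 0.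
Proof.
  intros Hf. rewrite (fsum_ext m f (fun _ => 0)) by exact Hf. clear Hf.
  induction m as [|m IH]; simpl; lra.
Qed.

Lemma fsum_nonneg m f : (forall i, 0 <= f i) -> 0 <= fsum m f.
Proof. intros Hf; induction m as [|m IH]; simpl; [lra|]. specialize (Hf m); lra. Qed.

Lemma fsum_double p f : fsum (2 * p) f = fsum p (fun j => f (2 * j)%nat + f (2 * j + 1)%nat).
Proof.
  induction p as [|p IH]; [reflexivity|].
  replace (2 * S p)%nat with (S (S (2 * p))) by lia. cbn [fsum]. rewrite IH.
  replace (S (2 * p)) with (2 * p + 1)%nat by lia. ring.
Qed.

Lemma fsum_cauchy_schwarz m a b :
  fsum m (fun i => a i * b i) ^ 2 <= fsum m (fun i => a i ^ 2) * fsum m (fun i => b i ^ 2).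
Proof.
  induction m as [|m IH]; cbn [fsum]; [lra|].
  set (A := fsum m (fun i => a i * b i)) in *.
  set (N := fsum m (fun i => a i ^ 2)) in *. set (G := fsum m (fun i => b i ^ 2)) in *.
  assert (HN : 0 <= N) by (apply fsum_nonneg; intros; apply pow2_ge_0).
  assert (HG : 0 <= G) by (apply fsum_nonneg; intros; apply pow2_ge_0).
  (* [2 A a b <= N b^2 + G a^2] since its square is at most [4 (N b^2)(G a^2)] *)
  assert (Hcross : 2 * A * (a m * b m) <= N * b m ^ 2 + G * a m ^ 2).
  { assert (H4 : (2 * A * (a m * b m)) ^ 2 <= (N * b m ^ 2 + G * a m ^ 2) ^ 2).
    { assert (A ^ 2 * (a m * b m) ^ 2 <= N * G * (a m * b m) ^ 2)
        by (apply Rmult_le_compat_r; [apply pow2_ge_0 | exact IH]).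
      pose proof (pow2_ge_0 (N * b m ^ 2 - G * a m ^ 2)). nra. }
    assert (0 <= N * b m ^ 2 + G * a m ^ 2)
      by (pose proof (pow2_ge_0 (a m)); pose proof (pow2_ge_0 (b m)); nra).
    nra. }
  replace ((A + a m * b m) ^ 2) with (A ^ 2 + 2 * A * (a m * b m) + (a m * b m) ^ 2) by ring.
  replace ((N + a m ^ 2) * (G + b m ^ 2))
    with (N * G + (N * b m ^ 2 + G * a m ^ 2) + (a m * b m) ^ 2) by ring.
  lra.
Qed.

Lemma fsum_stable p a : (forall j, (p <= j)%nat -> a j = 0) ->
  forall m, (p <= m)%nat -> fsum m a = fsum p a.
Proof.
  intros Ha m Hm. induction Hm as [|m Hm IH]; simpl; [reflexivity|].
  rewrite IH, Ha by exact Hm. ring.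
Qed.

Lemma is_series_fsum p a : (forall j, (p <= j)%nat -> a j = 0) -> is_series a (fsum p a).
Proof.
  intros Ha. apply is_series_Reals. intros eps Heps. exists p. intros n Hn.
  assert (Hsum : sum_f_R0 a n = fsum (S n) a).
  { clear Hn. induction n as [|n IH]; simpl in *; [ring | rewrite IH; ring]. }
  unfold R_dist. rewrite Hsum, (fsum_stable p) by (auto; lia).
  rewrite Rminus_diag, Rabs_R0. exact Heps.
Qed.

Definition lform (m : nat) (g : nat -> nat -> R) (u : nat -> R) (j : nat) : R :=
  fsum m (fun i => u i * g i j).

(* For symmetric [g] this is [sum_(i, j < m) g i j u_i u_j]. *)
Fixpoint qform (m : nat) (g : nat -> nat -> R) (u : nat -> R) : R :=
  match m with
  | O => 0
  | S m' => qform m' g u + 2 * u m' * lform m' g u m' + u m' ^ 2 * g m' m'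
  end.

Definition sqsum (m : nat) (u : nat -> R) : R := fsum m (fun i => u i ^ 2).

Definition posdef (m : nat) (g : nat -> nat -> R) : Prop :=
  forall u, (exists i, (i < m)%nat /\ u i <> 0) -> 0 < qform m g u.

Lemma lform_ext m g u u' j :
  (forall i, (i < m)%nat -> u i = u' i) -> lform m g u j = lform m g u' j.
Proof. intros Hu. apply fsum_ext. intros i Hi. rewrite Hu by exact Hi. reflexivity. Qed.

Lemma qform_ext m g u u' :
  (forall i, (i < m)%nat -> u i = u' i) -> qform m g u = qform m g u'.
Proof.
  induction m as [|m IH]; intros Hu; simpl; [reflexivity|].
  rewrite IH, (lform_ext m g u u') by (intros; apply Hu; lia).
  rewrite Hu by lia. reflexivity.
Qed.

Lemma qform_eq0 m g u : (forall i, (i < m)%nat -> u i = 0) -> qform m g u = 0.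
Proof.
  induction m as [|m IH]; intros Hu; simpl; [reflexivity|].
  rewrite IH by (intros; apply Hu; lia). rewrite Hu by lia. ring.
Qed.

Definition schur (g : nat -> nat -> R) (m : nat) (i j : nat) : R :=
  g i j - g i m * g j m / g m m.

Lemma lform_schur p g m u j : g m m <> 0 ->
  lform p (schur g m) u j = lform p g u j - lform p g u m * g j m / g m m.
Proof.
  intros Hm. unfold lform, schur.
  induction p as [|p IH]; cbn [fsum]; [field; exact Hm|]. rewrite IH. field. exact Hm.
Qed.

Lemma qform_schur p g m u : g m m <> 0 ->
  qform p (schur g m) u = qform p g u - lform p g u m ^ 2 / g m m.
Proof.
  intros Hm. induction p as [|p IH]; simpl; [unfold lform; simpl; field; exact Hm|].
  rewrite IH, lform_schur by exact Hm. unfold schur, lform. cbn [fsum]. field. exact Hm.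
Qed.

Lemma qform_S_schur m g u : g m m <> 0 ->
  qform (S m) g u = qform m (schur g m) u + (lform m g u m + g m m * u m) ^ 2 / g m m.
Proof. intros Hm. simpl. rewrite qform_schur by exact Hm. field. exact Hm. Qed.

Lemma posdef_diag m g : posdef (S m) g -> 0 < g m m.
Proof.
  intros Hpos.
  set (e := fun i => if Nat.eqb i m then 1 else 0).
  assert (He : forall i, (i < m)%nat -> e i = 0).
  { intros i Hi. unfold e. destruct (Nat.eqb_spec i m); [lia | reflexivity]. }
  assert (Hem : e m = 1) by (unfold e; rewrite Nat.eqb_refl; reflexivity).
  specialize (Hpos e ltac:(exists m; split; [lia | rewrite Hem; lra])).
  simpl in Hpos. rewrite qform_eq0, (lform_ext m g e (fun _ => 0)), Hem in Hpos by exact He.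
  unfold lform in Hpos. rewrite fsum_eq0 in Hpos by (intros; ring). lra.
Qed.

Lemma posdef_schur m g : posdef (S m) g -> posdef m (schur g m).
Proof.
  intros Hpos u Hu.
  assert (Hm : g m m <> 0) by (apply Rgt_not_eq, posdef_diag, Hpos).
  (* choose the last coordinate so that the completed square vanishes *)
  set (v := fun i => if Nat.eqb i m then - lform m g u m / g m m else u i).
  assert (Hvu : forall i, (i < m)%nat -> v i = u i).
  { intros i Hi. unfold v. destruct (Nat.eqb_spec i m); [lia | reflexivity]. }
  assert (Hv : 0 < qform (S m) g v).
  { apply Hpos. destruct Hu as [i [Hi Hui]].
    exists i. rewrite Hvu by exact Hi. split; [lia | exact Hui]. }
  rewrite qform_S_schur, (qform_ext m _ v u), (lform_ext m g v u) in Hv by assumption.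
  unfold v in Hv. rewrite Nat.eqb_refl in Hv.
  replace ((lform m g u m + g m m * (- lform m g u m / g m m)) ^ 2 / g m m) with 0 in Hv
    by (field; exact Hm).
  lra.
Qed.

Lemma coercive_step a G c' : 0 < a -> 0 <= G -> 0 < c' ->
  exists c, 0 < c /\ forall N L Q t, 0 <= N -> L ^ 2 <= N * G -> c' * N <= Q ->
    c * (N + t ^ 2) <= Q + (L + a * t) ^ 2 / a.
Proof.
  intros Ha HG Hc'.
  set (c := Rmin (a / 2) (c' * a ^ 2 / (a ^ 2 + 2 * G))).
  assert (Ha2 : 0 < a ^ 2) by (apply pow_lt; exact Ha).
  assert (Hc0 : 0 < c).
  { apply Rmin_glb_lt; [lra|]. apply Rdiv_lt_0_compat; [apply Rmult_lt_0_compat|]; lra. }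
  assert (Hca : c <= a / 2) by apply Rmin_l.
  assert (HcG : c * (a ^ 2 + 2 * G) <= c' * a ^ 2).
  { pose proof (Rmin_r (a / 2) (c' * a ^ 2 / (a ^ 2 + 2 * G))) as Hr. fold c in Hr.
    apply (Rmult_le_compat_r (a ^ 2 + 2 * G)) in Hr; [|lra].
    unfold Rdiv in Hr. rewrite Rmult_assoc, Rinv_l, Rmult_1_r in Hr by lra. exact Hr. }
  exists c. split; [exact Hc0|]. intros N L Q t HN HL HQ.
  set (w := L + a * t).
  (* [a t = w - L], hence [a^2 t^2 <= 2 w^2 + 2 L^2 <= 2 w^2 + 2 N G] *)
  assert (Ht : a ^ 2 * t ^ 2 <= 2 * w ^ 2 + 2 * (N * G)).
  { replace (a ^ 2 * t ^ 2) with ((w - L) ^ 2) by (unfold w; ring).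
    pose proof (pow2_ge_0 (w + L)). nra. }
  apply (Rmult_le_reg_l (a ^ 2)); [exact Ha2|].
  replace (a ^ 2 * (Q + w ^ 2 / a)) with (a ^ 2 * Q + a * w ^ 2) by (field; lra).
  assert (c * (a ^ 2 * t ^ 2) <= c * (2 * w ^ 2 + 2 * (N * G))) by (apply Rmult_le_compat_l; lra).
  assert (2 * c * w ^ 2 <= a * w ^ 2) by (pose proof (pow2_ge_0 w); nra).
  assert (c * N * (a ^ 2 + 2 * G) <= c' * a ^ 2 * N) by nra.
  nra.
Qed.

Lemma posdef_coercive m g : posdef m g ->
  exists c, 0 < c /\ forall u, c * sqsum m u <= qform m g u.
Proof.
  revert g. induction m as [|m IH]; intros g Hpos.
  - exists 1. split; [lra|]. intros u. unfold sqsum. simpl. lra.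
  - assert (Ha : 0 < g m m) by exact (posdef_diag m g Hpos).
    destruct (IH (schur g m) (posdef_schur m g Hpos)) as [c' [Hc' Hbound]].
    set (G := fsum m (fun i => g i m ^ 2)).
    assert (HG : 0 <= G) by (apply fsum_nonneg; intros; apply pow2_ge_0).
    destruct (coercive_step (g m m) G c' Ha HG Hc') as [c [Hc Hstep]].
    exists c. split; [exact Hc|]. intros u.
    rewrite qform_S_schur by lra. unfold sqsum. cbn [fsum]. fold (sqsum m u).
    apply Hstep.
    + apply fsum_nonneg. intros; apply pow2_ge_0.
    + apply fsum_cauchy_schwarz.
    + apply Hbound.
Qed.

Definition sqnorm (x : seqC) : R := Series (fun j => Cmod (x j) ^ 2).

Lemma Series_fsum p a : (forall j, (p <= j)%nat -> a j = 0) -> Series a = fsum p a.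
Proof. intros Ha. apply is_series_unique, is_series_fsum, Ha. Qed.

Lemma ex_series_lincomb (a b : nat -> R) s t :
  ex_series a -> ex_series b -> ex_series (fun n => s * a n + t * b n).
Proof.
  intros Ha Hb.
  exact (ex_series_plus _ _ (ex_series_scal_l s a Ha) (ex_series_scal_l t b Hb)).
Qed.

Lemma Series_lincomb (a b f : nat -> R) s t : ex_series a -> ex_series b ->
  (forall n, f n = s * a n + t * b n) -> Series f = s * Series a + t * Series b.
Proof.
  intros Ha Hb Hf. rewrite (Series_ext _ _ Hf), Series_plus, !Series_scal_l; [reflexivity|..].
  - exact (ex_series_scal_l s a Ha).
  - exact (ex_series_scal_l t b Hb).
Qed.

Lemma ex_series_dominated (a b : nat -> R) :
  (forall n, Rabs (a n) <= b n) -> ex_series b -> ex_series a.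
Proof. exact (@ex_series_le R_AbsRing R_CompleteNormedModule a b). Qed.

Lemma in_l2_dominated x y : in_l2 x -> (forall j, Cmod (y j) <= Cmod (x j)) -> in_l2 y.
Proof.
  intros Hx Hyx. apply (ex_series_dominated _ (fun j => Cmod (x j) ^ 2)); [intros j | exact Hx].
  rewrite Rabs_pos_eq by apply pow2_ge_0. pose proof (Cmod_ge_0 (y j)). specialize (Hyx j). nra.
Qed.

Lemma in_l2_finite_support (x : seqC) p : (forall j, (p <= j)%nat -> x j = RtoC 0) -> in_l2 x.
Proof.
  intros Hx. exists (fsum p (fun j => Cmod (x j) ^ 2)). apply is_series_fsum.
  intros j Hj. rewrite Hx, Cmod_0 by exact Hj. ring.
Qed.

Lemma in_l2_plus x y : in_l2 x -> in_l2 y -> in_l2 (fun j => (x j + y j)%C).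
Proof.
  intros Hx Hy.
  apply (ex_series_dominated _ (fun j => 2 * Cmod (x j) ^ 2 + 2 * Cmod (y j) ^ 2));
    [intros j | exact (ex_series_lincomb _ _ 2 2 Hx Hy)].
  rewrite Rabs_pos_eq by apply pow2_ge_0.
  pose proof (Cmod_triangle (x j) (y j)). pose proof (Cmod_ge_0 (x j + y j)%C).
  pose proof (pow2_ge_0 (Cmod (x j) - Cmod (y j))). nra.
Qed.

Lemma in_l2_scal (a : C) x : in_l2 x -> in_l2 (fun j => (a * x j)%C).
Proof.
  intros Hx.
  apply (ex_series_dominated _ (fun j => Cmod a ^ 2 * Cmod (x j) ^ 2));
    [intros j | exact (ex_series_scal_l (Cmod a ^ 2) _ Hx)].
  rewrite Rabs_pos_eq by apply pow2_ge_0. rewrite Cmod_mult. lra.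
Qed.

Lemma sqnorm_nonneg x : in_l2 x -> 0 <= sqnorm x.
Proof.
  intros Hx. apply Rle_trans with (Series (fun _ => 0)).
  - rewrite (Series_fsum 0) by reflexivity. simpl. lra.
  - apply Series_le; [intros j; split; [lra | apply pow2_ge_0] | exact Hx].
Qed.

Lemma ex_series_ip (f : C -> R) x y : (forall z, Rabs (f z) <= Cmod z) ->
  in_l2 x -> in_l2 y -> ex_series (fun j => f (Cconj (x j) * y j)%C).
Proof.
  intros Hf Hx Hy.
  apply (ex_series_dominated _ (fun j => 1 * Cmod (x j) ^ 2 + 1 * Cmod (y j) ^ 2));
    [intros j | exact (ex_series_lincomb _ _ 1 1 Hx Hy)].
  eapply Rle_trans; [apply Hf|]. rewrite Cmod_mult, Cmod_conj.
  pose proof (pow2_ge_0 (Cmod (x j) - Cmod (y j))).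
  pose proof (Cmod_ge_0 (x j)). pose proof (Cmod_ge_0 (y j)). nra.
Qed.

Lemma Rabs_Im_le_Cmod z : Rabs (Im z) <= Cmod z.
Proof. eapply Rle_trans; [apply Rmax_r | apply Rmax_Cmod]. Qed.

Lemma ex_series_Re_ip x y : in_l2 x -> in_l2 y -> ex_series (fun j => Re (Cconj (x j) * y j)%C).
Proof. apply ex_series_ip, re_le_Cmod. Qed.

Lemma ex_series_Im_ip x y : in_l2 x -> in_l2 y -> ex_series (fun j => Im (Cconj (x j) * y j)%C).
Proof. apply ex_series_ip, Rabs_Im_le_Cmod. Qed.

Lemma l2_ip_lincomb (x y z v w f : seqC) (r s : R) :
  in_l2 x -> in_l2 y -> in_l2 z -> in_l2 v ->
  (forall j, Cconj (w j) * f j = r * (Cconj (x j) * y j) + s * (Cconj (z j) * v j))%C ->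
  l2_ip w f = (r * l2_ip x y + s * l2_ip z v)%C.
Proof.
  intros Hx Hy Hz Hv Hwf.
  assert (Hre : Re (l2_ip w f) = r * Re (l2_ip x y) + s * Re (l2_ip z v)).
  { apply Series_lincomb; [apply ex_series_Re_ip; assumption .. |].
    intros j. rewrite Hwf. simpl. ring. }
  assert (Him : Im (l2_ip w f) = r * Im (l2_ip x y) + s * Im (l2_ip z v)).
  { apply Series_lincomb; [apply ex_series_Im_ip; assumption .. |].
    intros j. rewrite Hwf. simpl. ring. }
  revert Hre Him. generalize (l2_ip w f) (l2_ip x y) (l2_ip z v).
  intros [a1 a2] [b1 b2] [c1 c2] Hre Him. simpl in *.
  apply injective_projections; simpl; [rewrite Hre | rewrite Him]; ring.
Qed.

Lemma l2_ip_add_scal_l x y z (s : R) : in_l2 x -> in_l2 y -> in_l2 z ->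
  l2_ip (fun j => x j + s * y j)%C z = (l2_ip x z + s * l2_ip y z)%C.
Proof.
  intros Hx Hy Hz. rewrite (l2_ip_lincomb x z y z _ _ 1 s) by
    (try assumption; intros j; apply injective_projections; simpl; ring).
  rewrite Cmult_1_l. reflexivity.
Qed.

Lemma l2_ip_add_scal_r x y z (s : R) : in_l2 x -> in_l2 y -> in_l2 z ->
  l2_ip z (fun j => x j + s * y j)%C = (l2_ip z x + s * l2_ip z y)%C.
Proof.
  intros Hx Hy Hz. rewrite (l2_ip_lincomb z x z y _ _ 1 s) by
    (try assumption; intros j; apply injective_projections; simpl; ring).
  rewrite Cmult_1_l. reflexivity.
Qed.

Lemma l2_ip_self x : l2_ip x x = RtoC (sqnorm x).
Proof.
  unfold l2_ip, sqnorm, RtoC. f_equal.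
  - apply Series_ext. intros j. rewrite Cmod2_alt. destruct (x j). simpl. ring.
  - rewrite (Series_fsum 0); [reflexivity | intros j _; simpl; ring].
Qed.

Lemma Rmult_le_young a b e : 0 < e -> 2 * (a * b) <= e * a ^ 2 + / e * b ^ 2.
Proof.
  intros He.
  replace (e * a ^ 2 + / e * b ^ 2) with (2 * (a * b) + (e * a - b) ^ 2 * / e) by (field; lra).
  pose proof (pow2_ge_0 (e * a - b)). pose proof (Rinv_0_lt_compat e He). nra.
Qed.

Lemma Re_l2_ip_young x y e : in_l2 x -> in_l2 y -> 0 < e ->
  2 * Rabs (Re (l2_ip x y)) <= e * sqnorm x + / e * sqnorm y.
Proof.
  intros Hx Hy He.
  set (bound := fun j => e / 2 * Cmod (x j) ^ 2 + / e / 2 * Cmod (y j) ^ 2).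
  assert (Hbound : forall j, Rabs (Re (Cconj (x j) * y j)%C) <= bound j).
  { intros j. eapply Rle_trans; [apply re_le_Cmod|]. rewrite Cmod_mult, Cmod_conj.
    pose proof (Rmult_le_young (Cmod (x j)) (Cmod (y j)) e He). unfold bound. lra. }
  assert (Habs : Series (fun j => Rabs (Re (Cconj (x j) * y j)%C)) <= Series bound).
  { apply Series_le; [intros j; split; [apply Rabs_pos | apply Hbound]|].
    exact (ex_series_lincomb _ _ _ _ Hx Hy). }
  rewrite (Series_lincomb _ _ bound (e / 2) (/ e / 2) Hx Hy) in Habs by reflexivity.
  assert (Hex : ex_series (fun j => Rabs (Re (Cconj (x j) * y j)%C))).
  { apply (ex_series_ip (fun z => Rabs (Re z))); [|exact Hx | exact Hy].
    intros z. rewrite Rabs_Rabsolu. apply re_le_Cmod. }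
  pose proof (Series_Rabs _ Hex).
  unfold sqnorm. change (Re (l2_ip x y)) with (Series (fun j => Re (Cconj (x j) * y j)%C)).
  lra.
Qed.

Definition proj_head (k : nat) (x : seqC) : seqC :=
  fun j => if (j <? k)%nat then x j else RtoC 0.

(* [cbasis (2 j)] and [cbasis (2 j + 1)] are [e_j] and [i e_j]: a real basis of the
   complex span of [e_0, ..., e_(k-1)] is [cbasis 0, ..., cbasis (2 k - 1)]. *)
Definition cbasis (i : nat) : seqC :=
  fun j => if (j =? Nat.div2 i)%nat then (if Nat.even i then RtoC 1 else Ci) else RtoC 0.

Fixpoint comb (m : nat) (u : nat -> R) : seqC :=
  match m with
  | O => fun _ => RtoC 0
  | S m' => fun j => (comb m' u j + u m' * cbasis m' j)%C
  end.

Definition coords (x : seqC) (i : nat) : R :=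
  if Nat.even i then Re (x (Nat.div2 i)) else Im (x (Nat.div2 i)).

Lemma comb_double p u j :
  comb (2 * p) u j = if (j <? p)%nat then (u (2 * j)%nat, u (2 * j + 1)%nat) else RtoC 0.
Proof.
  induction p as [|p IH]; [reflexivity|].
  replace (2 * S p)%nat with (S (S (2 * p))) by lia. cbn [comb]. rewrite IH.
  replace (S (2 * p)) with (2 * p + 1)%nat by lia.
  unfold cbasis. rewrite Nat.div2_double, Nat.div2_odd', Nat.even_even, Nat.even_odd.
  destruct (Nat.ltb_spec j p), (Nat.eqb_spec j p), (Nat.ltb_spec j (S p));
    try lia; try subst j; apply injective_projections; simpl; ring.
Qed.

Lemma in_l2_cbasis i : in_l2 (cbasis i).
Proof.
  apply (in_l2_finite_support (cbasis i) (S (Nat.div2 i))). intros j Hj. unfold cbasis.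
  destruct (Nat.eqb_spec j (Nat.div2 i)); [lia | reflexivity].
Qed.

Lemma in_l2_comb m u : in_l2 (comb m u).
Proof.
  apply (in_l2_finite_support (comb m u) m). induction m as [|m IH]; intros j Hj; [reflexivity|].
  cbn [comb]. rewrite IH by lia. unfold cbasis.
  destruct (Nat.eqb_spec j (Nat.div2 m)); [pose proof (Nat.le_div2_diag_l m); lia|].
  apply injective_projections; simpl; ring.
Qed.

Lemma sqnorm_comb_double p u : sqnorm (comb (2 * p) u) = sqsum (2 * p) u.
Proof.
  unfold sqnorm, sqsum. rewrite fsum_double, (Series_fsum p).
  - apply fsum_ext. intros j Hj. rewrite comb_double, Cmod2_alt.
    destruct (Nat.ltb_spec j p); [reflexivity | lia].
  - intros j Hj. rewrite comb_double. destruct (Nat.ltb_spec j p); [lia|].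
    rewrite Cmod_0. ring.
Qed.

Lemma comb_double_eq0 p u : (forall j, comb (2 * p) u j = RtoC 0) ->
  forall i, (i < 2 * p)%nat -> u i = 0.
Proof.
  intros Hzero i Hi. specialize (Hzero (Nat.div2 i)).
  rewrite comb_double in Hzero. pose proof (Nat.div2_odd i) as Hdiv.
  destruct (Nat.ltb_spec (Nat.div2 i) p); [|destruct (Nat.odd i); simpl in Hdiv; lia].
  injection Hzero as Hre Him.
  destruct (Nat.odd i); simpl in Hdiv; rewrite Hdiv; [|rewrite Nat.add_0_r]; assumption.
Qed.

Lemma comb_coords k x : comb (2 * k) (coords x) = proj_head k x.
Proof.
  apply functional_extensionality. intros j. rewrite comb_double. unfold proj_head, coords.
  destruct (j <? k)%nat; [|reflexivity].
  rewrite Nat.even_even, Nat.even_odd, Nat.div2_double, Nat.div2_odd'.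
  destruct (x j). reflexivity.
Qed.

Lemma in_l2_add_scal x y (s : C) : in_l2 x -> in_l2 y -> in_l2 (fun j => x j + s * y j)%C.
Proof. intros Hx Hy. exact (in_l2_plus _ _ Hx (in_l2_scal s y Hy)). Qed.

Lemma in_l2_proj_head k x : in_l2 x -> in_l2 (proj_head k x).
Proof.
  intros Hx. apply (in_l2_dominated x); [exact Hx|]. intros j. unfold proj_head.
  destruct (j <? k)%nat; [lra|]. rewrite Cmod_0. apply Cmod_ge_0.
Qed.

Lemma in_l2_opL k x : in_l2 x -> in_l2 (opL k x).
Proof.
  intros Hx. apply (in_l2_dominated x); [exact Hx|]. intros j. unfold opL.
  destruct (j <? k)%nat; [|lra]. rewrite Cmod_0. apply Cmod_ge_0.
Qed.

Lemma proj_head_add_opL k x : (fun j => proj_head k x j + RtoC 1 * opL k x j)%C = x.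
Proof.
  apply functional_extensionality. intros j. unfold proj_head, opL.
  destruct (j <? k)%nat; apply injective_projections; simpl; ring.
Qed.

Lemma sqnorm_proj_head_opL k x : in_l2 x ->
  sqnorm x = sqnorm (proj_head k x) + sqnorm (opL k x).
Proof.
  intros Hx. unfold sqnorm.
  rewrite <- Series_plus by (apply in_l2_proj_head || apply in_l2_opL; exact Hx).
  apply Series_ext. intros j. unfold proj_head, opL.
  destruct (j <? k)%nat; rewrite Cmod_0; ring.
Qed.

Lemma l2_ip_opL k x : in_l2 x -> l2_ip x (opL k x) = RtoC (sqnorm (opL k x)).
Proof.
  intros Hx. pose proof (in_l2_opL k x Hx) as HL.
  rewrite (l2_ip_lincomb (opL k x) (opL k x) (opL k x) (opL k x) _ _ 1 0) by
    (try assumption; intros j; unfold opL; destruct (j <? k)%nat;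
     apply injective_projections; simpl; ring).
  rewrite l2_ip_self. apply injective_projections; simpl; ring.
Qed.

Section BoundedOperator.

Variable Y : seqC -> seqC.
Hypothesis HY : bounded_op Y.

Definition qf (x : seqC) : R := Re (l2_ip x (Y x)).

Definition polar (x y : seqC) : R := (Re (l2_ip x (Y y)) + Re (l2_ip y (Y x))) / 2.

Definition gram (i j : nat) : R := polar (cbasis i) (cbasis j).

Lemma in_l2_op x : in_l2 x -> in_l2 (Y x).
Proof. apply HY. Qed.

Lemma op_add_scal x y (s : R) : in_l2 x -> in_l2 y ->
  Y (fun j => x j + s * y j)%C = (fun j => Y x j + s * Y y j)%C.
Proof.
  intros Hx Hy. destruct HY as [_ [Hlin _]].
  apply functional_extensionality. intros j.
  rewrite <- (Cmult_1_l (Y x j)), <- Hlin by assumption.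
  f_equal. apply functional_extensionality. intros i. ring.
Qed.

Lemma op_zero : Y (fun _ => RtoC 0) = (fun _ => RtoC 0).
Proof.
  assert (H0 : in_l2 (fun _ => RtoC 0)) by (apply (in_l2_finite_support _ 0); reflexivity).
  pose proof (op_add_scal _ _ (-1) H0 H0) as H. cbv beta in H.
  replace (fun _ : nat => (RtoC 0 + RtoC (-1) * RtoC 0)%C) with (fun _ : nat => RtoC 0) in H
    by (apply functional_extensionality; intros; apply injective_projections; simpl; ring).
  rewrite H. apply functional_extensionality. intros j.
  apply injective_projections; simpl; ring.
Qed.

Lemma qf_add_scal x y (s : R) : in_l2 x -> in_l2 y ->
  qf (fun j => x j + s * y j)%C = qf x + 2 * s * polar x y + s ^ 2 * qf y.
Proof.
  intros Hx Hy. pose proof (in_l2_op x Hx). pose proof (in_l2_op y Hy).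
  unfold qf, polar.
  rewrite op_add_scal, l2_ip_add_scal_l, !l2_ip_add_scal_r by auto using in_l2_add_scal.
  generalize (l2_ip x (Y x)) (l2_ip x (Y y)) (l2_ip y (Y x)) (l2_ip y (Y y)).
  intros [] [] [] []. simpl. field.
Qed.

Lemma polar_add_scal_l x y z (s : R) : in_l2 x -> in_l2 y -> in_l2 z ->
  polar (fun j => x j + s * y j)%C z = polar x z + s * polar y z.
Proof.
  intros Hx Hy Hz. pose proof (in_l2_op x Hx). pose proof (in_l2_op y Hy).
  pose proof (in_l2_op z Hz). unfold polar.
  rewrite op_add_scal, l2_ip_add_scal_l, l2_ip_add_scal_r by auto.
  generalize (l2_ip x (Y z)) (l2_ip y (Y z)) (l2_ip z (Y x)) (l2_ip z (Y y)).
  intros [] [] [] []. simpl. field.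
Qed.

Lemma polar_comb m u j : polar (comb m u) (cbasis j) = lform m gram u j.
Proof.
  induction m as [|m IH].
  - cbn [comb]. unfold polar, lform, l2_ip, Re. rewrite op_zero.
    rewrite !(Series_fsum 0) by (intros; simpl; ring). simpl. field.
  - cbn [comb]. rewrite polar_add_scal_l, IH by (apply in_l2_comb || apply in_l2_cbasis).
    unfold lform, gram. cbn [fsum]. ring.
Qed.

Lemma qf_comb m u : qf (comb m u) = qform m gram u.
Proof.
  induction m as [|m IH].
  - cbn [comb]. unfold qf, l2_ip, Re. rewrite (Series_fsum 0) by (intros; simpl; ring).
    reflexivity.
  - cbn [comb]. rewrite qf_add_scal, IH, polar_comb by (apply in_l2_comb || apply in_l2_cbasis).
    simpl qform. replace (qf (cbasis m)) with (gram m m) by (unfold gram, polar, qf; field).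
    ring.
Qed.

Lemma op_sqnorm_bound : exists B, 0 < B /\ forall z, in_l2 z -> sqnorm (Y z) <= B * sqnorm z.
Proof.
  destruct HY as [HYl2 [_ [M HM]]]. exists (M ^ 2 + 1). split; [pose proof (pow2_ge_0 M); lra|].
  intros z Hz. specialize (HM z Hz). change (sqrt (sqnorm (Y z)) <= M * sqrt (sqnorm z)) in HM.
  rewrite <- (pow2_sqrt (sqnorm z)), <- (pow2_sqrt (sqnorm (Y z)))
    by (apply sqnorm_nonneg; auto).
  pose proof (sqrt_pos (sqnorm (Y z))). pose proof (pow2_ge_0 (sqrt (sqnorm z))). nra.
Qed.

Lemma polar_abs_le B v w e : (forall z, in_l2 z -> sqnorm (Y z) <= B * sqnorm z) ->
  0 < B -> 0 < e -> in_l2 v -> in_l2 w ->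
  2 * Rabs (polar v w) <= e * sqnorm v + B / e * sqnorm w.
Proof.
  intros HB HB0 He Hv Hw.
  pose proof (Re_l2_ip_young v (Y w) e Hv (in_l2_op w Hw) He) as Hvw.
  assert (HBe : 0 < B / e) by (apply Rdiv_lt_0_compat; assumption).
  pose proof (Re_l2_ip_young w (Y v) (B / e) Hw (in_l2_op v Hv) HBe) as Hwv.
  assert (/ e * sqnorm (Y w) <= B / e * sqnorm w).
  { unfold Rdiv. rewrite (Rmult_comm B), Rmult_assoc.
    apply Rmult_le_compat_l; [left; apply Rinv_0_lt_compat|]; auto. }
  assert (/ (B / e) * sqnorm (Y v) <= e * sqnorm v).
  { replace e with (/ (B / e) * B) at 2 by (field; lra). rewrite Rmult_assoc.
    apply Rmult_le_compat_l; [left; apply Rinv_0_lt_compat|]; auto. }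
  unfold polar. pose proof (Rabs_triang (Re (l2_ip v (Y w))) (Re (l2_ip w (Y v)))).
  replace (2 * Rabs ((Re (l2_ip v (Y w)) + Re (l2_ip w (Y v))) / 2))
    with (Rabs (Re (l2_ip v (Y w)) + Re (l2_ip w (Y v)))).
  - lra.
  - unfold Rdiv. rewrite Rabs_mult, Rabs_inv, (Rabs_pos_eq 2) by lra. field.
Qed.

Lemma Rmin_div_mul_le c E V W q : 0 <= E -> 0 <= V -> 0 <= W -> 0 <= q ->
  c * V - E * W <= q -> Rmin c 1 / (1 + E) * (V + W) <= W + q.
Proof.
  intros HE HV HW Hq Hlow.
  apply (Rmult_le_reg_l (1 + E)); [lra|].
  replace ((1 + E) * (Rmin c 1 / (1 + E) * (V + W))) with (Rmin c 1 * V + Rmin c 1 * W)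
    by (field; lra).
  assert (Rmin c 1 * V <= c * V) by (apply Rmult_le_compat_r; [exact HV | apply Rmin_l]).
  assert (Rmin c 1 * W <= 1 * W) by (apply Rmult_le_compat_r; [exact HW | apply Rmin_r]).
  assert (0 <= E * q) by (apply Rmult_le_pos; assumption).
  nra.
Qed.

Section Coercivity.

Variable k : nat.
Hypothesis Hnonneg : forall x, in_l2 x -> Cge (l2_ip x (Y x)) (RtoC 0).
Hypothesis Hdefinite : forall x, in_l2 x -> (forall j, opL k x j = RtoC 0) ->
  l2_ip x (Y x) = RtoC 0 -> forall j, x j = RtoC 0.

Lemma qf_nonneg x : in_l2 x -> 0 <= qf x.
Proof. intros Hx. apply (Hnonneg x Hx). Qed.

Lemma posdef_gram : posdef (2 * k) gram.
Proof.
  intros u [i [Hi Hui]]. rewrite <- qf_comb.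
  set (z := comb (2 * k) u).
  assert (Hz : in_l2 z) by apply in_l2_comb.
  assert (HLz : forall j, opL k z j = RtoC 0).
  { intros j. unfold opL. destruct (Nat.ltb_spec j k); [reflexivity|].
    unfold z. rewrite comb_double. destruct (Nat.ltb_spec j k); [lia | reflexivity]. }
  pose proof (Hdefinite z Hz HLz) as Hzero. destruct (Hnonneg z Hz) as [Him Hre].
  unfold qf. revert Him Hre Hzero. generalize (l2_ip z (Y z)). intros [a b]. simpl.
  intros -> Ha Hzero.
  destruct (Rle_lt_or_eq_dec _ _ Ha) as [Hlt | <-]; [exact Hlt|].
  exfalso. apply Hui. apply (comb_double_eq0 k u); [|exact Hi]. apply Hzero. reflexivity.
Qed.

Lemma qf_proj_head_coercive :
  exists c, 0 < c /\ forall x, c * sqnorm (proj_head k x) <= qf (proj_head k x).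
Proof.
  destruct (posdef_coercive _ _ posdef_gram) as [c [Hc Hbound]].
  exists c. split; [exact Hc|]. intros x.
  rewrite <- comb_coords, sqnorm_comb_double, qf_comb. apply Hbound.
Qed.

Lemma sqnorm_opL_add_qf_coercive :
  exists kappa, 0 < kappa /\ forall x, in_l2 x -> kappa * sqnorm x <= sqnorm (opL k x) + qf x.
Proof.
  destruct qf_proj_head_coercive as [c [Hc Hhead]].
  destruct op_sqnorm_bound as [B [HB HYB]].
  exists (Rmin (c / 2) 1 / (1 + 2 * B / c)). split.
  { apply Rdiv_lt_0_compat; [apply Rmin_glb_lt; lra|].
    assert (0 < 2 * B / c) by (apply Rdiv_lt_0_compat; lra). lra. }
  intros x Hx.
  pose proof (in_l2_proj_head k x Hx) as Hv. pose proof (in_l2_opL k x Hx) as Hw.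
  assert (Hq : qf x = qf (proj_head k x) + 2 * polar (proj_head k x) (opL k x) + qf (opL k x)).
  { rewrite <- (proj_head_add_opL k x) at 1. rewrite qf_add_scal by assumption. ring. }
  pose proof (polar_abs_le B _ _ (c / 2) HYB HB ltac:(lra) Hv Hw) as Hcross.
  replace (B / (c / 2)) with (2 * B / c) in Hcross by (field; lra).
  pose proof (Rabs_maj2 (polar (proj_head k x) (opL k x))).
  rewrite (sqnorm_proj_head_opL k x Hx).
  apply Rmin_div_mul_le.
  - apply Rlt_le, Rdiv_lt_0_compat; lra.
  - apply sqnorm_nonneg, Hv.
  - apply sqnorm_nonneg, Hw.
  - apply qf_nonneg, Hx.
  - pose proof (Hhead x). pose proof (qf_nonneg _ Hw). lra.
Qed.

End Coercivity.

End BoundedOperator.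

Theorem lemma1 (k : nat) (Y : seqC -> seqC) (HY : bounded_op Y)
  (H1 : forall x, in_l2 x -> Cge (l2_ip x (Y x)) (RtoC 0))
  (H2 : forall x, in_l2 x -> (forall j, opL k x j = RtoC 0) ->
        l2_ip x (Y x) = RtoC 0 -> forall j, x j = RtoC 0) :
  exists kappa : R, 0 < kappa /\
    forall x, in_l2 x ->
      Cge (l2_ip x (fun j => Cplus (opL k x j) (Y x j)))
          (Cmult (RtoC kappa) (l2_ip x x)).
Proof.
  destruct (sqnorm_opL_add_qf_coercive Y HY k H1 H2) as [kappa [Hkappa Hbound]].
  exists kappa. split; [exact Hkappa|]. intros x Hx.
  pose proof (in_l2_opL k x Hx) as HLx. pose proof (in_l2_op Y HY x Hx) as HYx.
  rewrite (l2_ip_lincomb x (opL k x) x (Y x) x _ 1 1) by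
    (try assumption; intros j; apply injective_projections; simpl; ring).
  rewrite l2_ip_opL, l2_ip_self by exact Hx.
  specialize (Hbound x Hx). destruct (H1 x Hx) as [Him _]. unfold qf in Hbound.
  revert Him Hbound. generalize (l2_ip x (Y x)). intros [a b]. simpl. intros -> Hbound.
  split; simpl; lra.
Qed.
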